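(* Let $G$ be a Polish group, $d$, $G_0$, $\mathcal L(G,d)$ and $X\subseteq \mathcal L(G,d)^{\mathbb Q^{<\mathbb N}}$ as in the context. Then $X$ is invariant under the action of $G$: if $\vec f\in X$ and $g\in G$ then $g\cdot\vec f\in X$.
   Context: Let $G$ be a Polish group, $d$ a compatible right-invariant metric on $G$ (i.e. $d(g_0h,g_1h)=d(g_0,g_1)$) bounded by $1$, and $G_0$ a countable dense subgroup of $G$. Let $\mathcal L(G,d)$ be the set of functions $f:G\to[0,1]$ with $|f(g_1)-f(g_2)|\le d(g_1,g_2)$ for all $g_1,g_2$. Let $\mathbb Q^{<\mathbb N}$ be the set of finite sequences of rationals; for $s\in\mathbb Q^{<\mathbb N}$ and rationals $a_1,\dots,a_k$, $sa_1\dots a_k$ denotes the sequence $s$ followed by $a_1,\dots,a_k$ (natural numbers are regarded as rationals). Elements of $\mathcal L(G,d)^{\mathbb Q^{<\mathbb N}}$ are families $\vec f=(f_s)_{s\in\mathbb Q^{<\mathbb N}}$, and $G$ acts by $(g\cdot\vec f)_s(g_0)=f_s(g_0g)$. Let $X$ be the set of $\vec f\in\mathcal L(G,d)^{\mathbb Q^{<\mathbb N}}$ such that, writing $t=sq_0q_1q_2\,0\,m\,n$ and $u=sq_0q_1q_2\,1\,m\,n$: (1) for all $s\in\mathbb Q^{<\mathbb N}$, $g_0\in G_0$, $m,n\in\mathbb N$, $q_0,q_1,q_2,\epsilon\in\mathbb Q\cap(0,1)$ with $0<q_i\pm\epsilon<1$ ($i=0,1,2$): $f_t(g_0)<q_1-\epsilon$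 or $f_s(g_0)\le q_0+\epsilon$; (2) for the same range of parameters: $f_u(g_0)\ge q_2+\epsilon$ or $f_t(g_0)\ge q_1-\epsilon$; (3) for all $s\in\mathbb Q^{<\mathbb N}$, $g_0\in G_0$, $q_0,\epsilon\in\mathbb Q\cap(0,1)$: if $f_s(g_0)<q_0$ then there are $q_1,q_2\in\mathbb Q$, $g_1\in G_0$, $m,n\in\mathbb N$ with $0<q_2<q_1<q_0<1$, $d(g_0,g_1)<\epsilon$, and $f_u(g_1)<q_2$ where $u=sq_0q_1q_2\,1\,m\,n$. *)

From Stdlib Require Import Reals QArith Qcanon List.
Import ListNotations.
Open Scope R_scope.

Definition is_group {G : Type} (mul : G -> G -> G) (inv : G -> G) (e : G) : Prop :=
  (forall x y z, mul x (mul y z) = mul (mul x y) z) /\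
  (forall x, mul e x = x /\ mul x e = x) /\
  (forall x, mul (inv x) x = e /\ mul x (inv x) = e).

Definition is_metric {G : Type} (d : G -> G -> R) : Prop :=
  (forall x y, 0 <= d x y) /\
  (forall x y, d x y = 0 <-> x = y) /\
  (forall x y, d x y = d y x) /\
  (forall x y z, d x z <= d x y + d y z).

Definition metric_open {G : Type} (d : G -> G -> R) (U : G -> Prop) : Prop :=
  forall x, U x -> exists r, 0 < r /\ forall y, d x y < r -> U y.

Definition metric_cauchy {G : Type} (d : G -> G -> R) (u : nat -> G) : Prop :=
  forall eps, 0 < eps -> exists N, forall m n, (N <= m)%nat -> (N <= n)%nat ->
    d (u m) (u n) < eps.

Definition metric_complete {G : Type} (d : G -> G -> R) : Prop :=
  forall u, metric_cauchy d u ->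
    exists l, forall eps, 0 < eps -> exists N, forall n, (N <= n)%nat -> d (u n) l < eps.

Definition metric_dense {G : Type} (d : G -> G -> R) (A : G -> Prop) : Prop :=
  forall x eps, 0 < eps -> exists a, A a /\ d x a < eps.

Definition countable_set {G : Type} (A : G -> Prop) : Prop :=
  exists enum : nat -> G, forall x, A x <-> exists n, enum n = x.

Definition polish_metric_topology {G : Type} (d : G -> G -> R) : Prop :=
  (exists D : G -> Prop, countable_set D /\ metric_dense d D) /\
  (exists d', is_metric d' /\ metric_complete d' /\
     forall U, metric_open d U <-> metric_open d' U).

Definition polish_group_with_metric {G : Type} (mul : G -> G -> G) (inv : G -> G)
  (e : G) (d : G -> G -> R) : Prop :=
  is_group mul inv e /\ is_metric d /\
  (forall x y eps, 0 < eps -> exists del, 0 < del /\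
     forall x' y', d x x' < del -> d y y' < del -> d (mul x y) (mul x' y') < eps) /\
  (forall x eps, 0 < eps -> exists del, 0 < del /\
     forall x', d x x' < del -> d (inv x) (inv x') < eps) /\
  polish_metric_topology d.

Definition right_invariant {G : Type} (mul : G -> G -> G) (d : G -> G -> R) : Prop :=
  forall g0 g1 h, d (mul g0 h) (mul g1 h) = d g0 g1.

Definition is_subgroup {G : Type} (mul : G -> G -> G) (inv : G -> G) (e : G)
  (H : G -> Prop) : Prop :=
  H e /\ (forall x y, H x -> H y -> H (mul x y)) /\ (forall x, H x -> H (inv x)).

Definition in_L {G : Type} (d : G -> G -> R) (f : G -> R) : Prop :=
  (forall g, 0 <= f g <= 1) /\
  (forall g1 g2, Rabs (f g1 - f g2) <= d g1 g2).

Definition nat2Qc (n : nat) : Qc := Q2Qc (inject_Z (Z.of_nat n)).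

Definition QcR (q : Qc) : R := Q2R (this q).

Definition in_unit_Q (q : Qc) : Prop := 0 < QcR q < 1.

Definition ext (s : list Qc) (q0 q1 q2 : Qc) (b m n : nat) : list Qc :=
  s ++ [q0; q1; q2; nat2Qc b; nat2Qc m; nat2Qc n].

Definition in_X {G : Type} (mul : G -> G -> G) (d : G -> G -> R) (G0 : G -> Prop)
  (F : list Qc -> G -> R) : Prop :=
  (forall s, in_L d (F s)) /\
  (forall s g0 m n q0 q1 q2 eps, G0 g0 ->
     in_unit_Q q0 -> in_unit_Q q1 -> in_unit_Q q2 -> in_unit_Q eps ->
     0 < QcR q0 - QcR eps < 1 -> 0 < QcR q0 + QcR eps < 1 ->
     0 < QcR q1 - QcR eps < 1 -> 0 < QcR q1 + QcR eps < 1 ->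
     0 < QcR q2 - QcR eps < 1 -> 0 < QcR q2 + QcR eps < 1 ->
     F (ext s q0 q1 q2 0 m n) g0 < QcR q1 - QcR eps \/ F s g0 <= QcR q0 + QcR eps) /\
  (forall s g0 m n q0 q1 q2 eps, G0 g0 ->
     in_unit_Q q0 -> in_unit_Q q1 -> in_unit_Q q2 -> in_unit_Q eps ->
     0 < QcR q0 - QcR eps < 1 -> 0 < QcR q0 + QcR eps < 1 ->
     0 < QcR q1 - QcR eps < 1 -> 0 < QcR q1 + QcR eps < 1 ->
     0 < QcR q2 - QcR eps < 1 -> 0 < QcR q2 + QcR eps < 1 ->
     F (ext s q0 q1 q2 1 m n) g0 >= QcR q2 + QcR eps \/
     F (ext s q0 q1 q2 0 m n) g0 >= QcR q1 - QcR eps) /\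
  (forall s g0 q0 eps, G0 g0 -> in_unit_Q q0 -> in_unit_Q eps ->
     F s g0 < QcR q0 ->
     exists q1 q2 g1 m n,
       0 < QcR q2 < QcR q1 /\ QcR q1 < QcR q0 /\ QcR q0 < 1 /\
       G0 g1 /\ d g0 g1 < QcR eps /\
       F (ext s q0 q1 q2 1 m n) g1 < QcR q2).

Definition act {G : Type} (mul : G -> G -> G) (g : G) (F : list Qc -> G -> R) :
  list Qc -> G -> R := fun s g0 => F s (mul g0 g).

From Stdlib Require Import Reals QArith Qcanon List Qreals Lra Lia.
Import ListNotations.
Open Scope R_scope.

(* Right translation by [g] is an isometry of a right-invariant metric, so it
   preserves [L(G,d)] and maps the conditions (1)-(3), when required at every
   point of [G], to themselves.  Restricting the points to the dense set [G0]
   changes nothing: the functions [f_s] are 1-Lipschitz and all inequalities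
   involved are strict or can be slackened by a rational amount, so each
   condition at a point of [G] follows from the condition at a nearby point of
   [G0], and conversely witnesses in [G] can be moved into [G0]. *)

Lemma Qc_dense (a b : R) : a < b -> exists q : Qc, a < QcR q < b.
Proof.
  intros Hab.
  set (n := up (/ (b - a))).
  destruct (archimed (/ (b - a))) as [Hn _]; fold n in Hn.
  assert (Hinv : 0 < / (b - a)) by (apply Rinv_0_lt_compat; lra).
  assert (Hnpos : (0 < n)%Z) by (apply lt_IZR; lra).
  set (m := up (a * IZR n)).
  destruct (archimed (a * IZR n)) as [Hm1 Hm2]; fold m in Hm1, Hm2.
  exists (Q2Qc (Qmake m (Z.to_pos n))).
  change (a < Q2R (Qred (Qmake m (Z.to_pos n))) < b).
  rewrite (Qeq_eqR _ _ (Qred_correct _)); unfold Q2R; simpl.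
  rewrite Z2Pos.id by lia.
  assert (Hnr : 0 < IZR n) by (apply IZR_lt; lia).
  assert (Hgap : IZR n * (b - a) > 1).
  { apply (Rmult_lt_reg_r (/ (b - a))); auto.
    rewrite Rmult_assoc, Rinv_r by lra. lra. }
  split; apply (Rmult_lt_reg_r (IZR n)); auto;
    unfold Rdiv; rewrite Rmult_assoc, Rinv_l by lra; nra.
Qed.

Lemma Qc_dense_Forall (l : list R) (a b : R) :
  a < b -> Forall (Rlt a) l -> exists q : Qc, a < QcR q < b /\ Forall (Rlt (QcR q)) l.
Proof.
  revert b; induction l as [|x l IH]; intros b Hab Hl.
  - destruct (Qc_dense a b Hab) as [q Hq]. exists q. auto.
  - apply Forall_cons_iff in Hl as [Hx Hl].
    destruct (IH (Rmin b x)) as (q & [Hq1 Hq2] & Hql); auto.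
    { apply Rmin_glb_lt; assumption. }
    apply Rmin_Rgt_l in Hq2 as [Hqb Hqx].
    exists q. auto.
Qed.

Lemma metric_dense2 {G : Type} (d : G -> G -> R) (A : G -> Prop) (x : G) (r1 r2 : R) :
  metric_dense d A -> 0 < r1 -> 0 < r2 -> exists a, A a /\ d x a < r1 /\ d x a < r2.
Proof.
  intros Hdense H1 H2.
  destruct (Hdense x (Rmin r1 r2)) as (a & Ha & Hxa); [apply Rmin_glb_lt; assumption|].
  apply Rmin_Rgt_l in Hxa as [Hxa1 Hxa2].
  exists a. auto.
Qed.

Lemma in_L_ge {G : Type} (d : G -> G -> R) (f : G -> R) (x y : G) :
  in_L d f -> f y >= f x - d x y.
Proof.
  intros [_ Hlip]. specialize (Hlip x y).
  pose proof (Rle_abs (f x - f y)). lra.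
Qed.

Lemma in_L_le {G : Type} (d : G -> G -> R) (f : G -> R) (x y : G) :
  in_L d f -> f y <= f x + d x y.
Proof.
  intros [_ Hlip]. specialize (Hlip x y).
  pose proof (Rle_abs (- (f x - f y))). rewrite Rabs_Ropp in *. lra.
Qed.

Lemma in_L_translate {G : Type} (mul : G -> G -> G) (d : G -> G -> R) (f : G -> R) (g : G) :
  right_invariant mul d -> in_L d f -> in_L d (fun x => f (mul x g)).
Proof.
  intros Hright [Hrange Hlip]. split.
  - intros x. apply Hrange.
  - intros x y. rewrite <- (Hright x y g). apply Hlip.
Qed.

Section Conditions.

Variables (G : Type) (d : G -> G -> R).

Definition condition1 (G0 : G -> Prop) (F : list Qc -> G -> R) : Prop :=
  forall s g0 m n q0 q1 q2 eps, G0 g0 ->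
     in_unit_Q q0 -> in_unit_Q q1 -> in_unit_Q q2 -> in_unit_Q eps ->
     0 < QcR q0 - QcR eps < 1 -> 0 < QcR q0 + QcR eps < 1 ->
     0 < QcR q1 - QcR eps < 1 -> 0 < QcR q1 + QcR eps < 1 ->
     0 < QcR q2 - QcR eps < 1 -> 0 < QcR q2 + QcR eps < 1 ->
     F (ext s q0 q1 q2 0 m n) g0 < QcR q1 - QcR eps \/ F s g0 <= QcR q0 + QcR eps.

Definition condition2 (G0 : G -> Prop) (F : list Qc -> G -> R) : Prop :=
  forall s g0 m n q0 q1 q2 eps, G0 g0 ->
     in_unit_Q q0 -> in_unit_Q q1 -> in_unit_Q q2 -> in_unit_Q eps ->
     0 < QcR q0 - QcR eps < 1 -> 0 < QcR q0 + QcR eps < 1 ->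
     0 < QcR q1 - QcR eps < 1 -> 0 < QcR q1 + QcR eps < 1 ->
     0 < QcR q2 - QcR eps < 1 -> 0 < QcR q2 + QcR eps < 1 ->
     F (ext s q0 q1 q2 1 m n) g0 >= QcR q2 + QcR eps \/
     F (ext s q0 q1 q2 0 m n) g0 >= QcR q1 - QcR eps.

Definition condition3 (G0 : G -> Prop) (F : list Qc -> G -> R) : Prop :=
  forall s g0 q0 eps, G0 g0 -> in_unit_Q q0 -> in_unit_Q eps ->
     F s g0 < QcR q0 ->
     exists q1 q2 g1 m n,
       0 < QcR q2 < QcR q1 /\ QcR q1 < QcR q0 /\ QcR q0 < 1 /\
       G0 g1 /\ d g0 g1 < QcR eps /\
       F (ext s q0 q1 q2 1 m n) g1 < QcR q2.

Lemma in_XE (mul : G -> G -> G) (G0 : G -> Prop) (F : list Qc -> G -> R) :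
  in_X mul d G0 F <->
  (forall s, in_L d (F s)) /\ condition1 G0 F /\ condition2 G0 F /\ condition3 G0 F.
Proof. reflexivity. Qed.

Definition everywhere (_ : G) : Prop := True.

Variables (G0 : G -> Prop) (F : list Qc -> G -> R).
Hypothesis triangle : forall x y z, d x z <= d x y + d y z.
Hypothesis G0_dense : metric_dense d G0.
Hypothesis F_in_L : forall s, in_L d (F s).

(* The tolerance [eps] is raised to a rational [eps'] that is still admissible
   and leaves room for moving [h] into [G0] by less than [eps' - eps]. *)
Lemma condition1_everywhere : condition1 G0 F -> condition1 everywhere F.
Proof.
  intros H1 s h m n q0 q1 q2 eps _ U0 U1 U2 Ue A0 B0 A1 B1 A2 B2.
  set (t := ext s q0 q1 q2 0 m n).
  destruct (Rlt_dec (F t h) (QcR q1 - QcR eps)) as [|Ht]; [left; assumption|].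
  destruct (Rle_dec (F s h) (QcR q0 + QcR eps)) as [|Hs]; [right; assumption|].
  exfalso. apply Rnot_lt_le in Ht. apply Rnot_le_lt in Hs.
  set (eta := F s h - (QcR q0 + QcR eps)).
  destruct (Qc_dense_Forall
              [QcR q0; 1 - QcR q0; QcR q1; 1 - QcR q1; QcR q2; 1 - QcR q2]
              (QcR eps) (QcR eps + eta / 2)) as (eps' & [E1 E2] & Hbounds).
  { unfold eta; lra. }
  { repeat (apply Forall_cons; [lra|]). apply Forall_nil. }
  rewrite !Forall_cons_iff in Hbounds.
  destruct Hbounds as (C0 & D0 & C1 & D1 & C2 & D2 & _).
  destruct (G0_dense h (QcR eps' - QcR eps)) as (h' & Hh' & Hhh'); [lra|].
  pose proof (in_L_ge d _ h h' (F_in_L t)).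
  pose proof (in_L_ge d _ h h' (F_in_L s)).
  assert (Ue' : in_unit_Q eps') by (unfold in_unit_Q in *; lra).
  unfold in_unit_Q in *.
  destruct (H1 s h' m n q0 q1 q2 eps' Hh' U0 U1 U2 Ue') as [C|C];
    unfold t, eta in *; lra.
Qed.

Lemma condition2_everywhere : condition2 G0 F -> condition2 everywhere F.
Proof.
  intros H2 s h m n q0 q1 q2 eps _ U0 U1 U2 Ue A0 B0 A1 B1 A2 B2.
  set (t := ext s q0 q1 q2 0 m n).
  set (u := ext s q0 q1 q2 1 m n).
  destruct (Rge_dec (F u h) (QcR q2 + QcR eps)) as [|Hu]; [left; assumption|].
  destruct (Rge_dec (F t h) (QcR q1 - QcR eps)) as [|Ht]; [right; assumption|].
  exfalso. apply Rnot_ge_lt in Hu. apply Rnot_ge_lt in Ht.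
  destruct (metric_dense2 d G0 h (QcR q2 + QcR eps - F u h) (QcR q1 - QcR eps - F t h))
    as (h' & Hh' & Hu' & Ht'); try lra; auto.
  pose proof (in_L_le d _ h h' (F_in_L t)).
  pose proof (in_L_le d _ h h' (F_in_L u)).
  destruct (H2 s h' m n q0 q1 q2 eps Hh' U0 U1 U2 Ue A0 B0 A1 B1 A2 B2); unfold t, u in *; lra.
Qed.

Lemma condition3_everywhere : condition3 G0 F -> condition3 everywhere F.
Proof.
  intros H3 s h q0 eps _ U0 Ue Hs.
  unfold in_unit_Q in *.
  destruct (Qc_dense 0 (QcR eps / 2)) as [eps' Heps']; [lra|].
  destruct (metric_dense2 d G0 h (QcR q0 - F s h) (QcR eps / 2))
    as (h' & Hh' & Hs' & Hhh'); try lra; auto.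
  pose proof (in_L_le d _ h h' (F_in_L s)).
  destruct (H3 s h' q0 eps' Hh' U0 ltac:(split; lra) ltac:(lra))
    as (q1 & q2 & g1 & m & n & Hq & Hq1 & Hq0 & _ & Hh'g1 & Hu).
  pose proof (triangle h h' g1).
  exists q1, q2, g1, m, n. repeat split; try lra; exact I.
Qed.

Lemma condition3_dense : condition3 everywhere F -> condition3 G0 F.
Proof.
  intros H3 s g0 q0 eps Hg0 U0 Ue Hs.
  destruct (H3 s g0 q0 eps I U0 Ue Hs)
    as (q1 & q2 & g1 & m & n & Hq & Hq1 & Hq0 & _ & Hg0g1 & Hu).
  set (u := ext s q0 q1 q2 1 m n) in Hu.
  destruct (metric_dense2 d G0 g1 (QcR eps - d g0 g1) (QcR q2 - F u g1))
    as (g1' & Hg1' & Hg1g1' & Hu'); try lra; auto.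
  pose proof (in_L_le d _ g1 g1' (F_in_L u)).
  pose proof (triangle g0 g1 g1').
  exists q1, q2, g1', m, n. repeat split; auto; unfold u in *; lra.
Qed.

Lemma in_X_everywhere (mul : G -> G -> G) :
  in_X mul d G0 F <-> in_X mul d everywhere F.
Proof.
  rewrite !in_XE.
  split; intros (HL & H1 & H2 & H3); refine (conj HL (conj _ (conj _ _))).
  - apply condition1_everywhere, H1.
  - apply condition2_everywhere, H2.
  - apply condition3_everywhere, H3.
  - intros s g0 m n q0 q1 q2 eps _. apply H1; exact I.
  - intros s g0 m n q0 q1 q2 eps _. apply H2; exact I.
  - apply condition3_dense, H3.
Qed.

End Conditions.

Lemma in_X_everywhere_translate {G : Type} (mul : G -> G -> G) (inv : G -> G) (e : G)
  (d : G -> G -> R) (F : list Qc -> G -> R) (g : G) :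
  is_group mul inv e -> right_invariant mul d ->
  in_X mul d (everywhere G) F -> in_X mul d (everywhere G) (act mul g F).
Proof.
  intros (Hassoc & Hunit & Hinv) Hright (HL & H1 & H2 & H3).
  unfold act. refine (conj _ (conj _ (conj _ _))).
  - intros s. apply in_L_translate; auto.
  - intros s g0 m n q0 q1 q2 eps _. apply H1. exact I.
  - intros s g0 m n q0 q1 q2 eps _. apply H2. exact I.
  - intros s g0 q0 eps _ U0 Ue Hs.
    destruct (H3 s (mul g0 g) q0 eps I U0 Ue Hs)
      as (q1 & q2 & g1 & m & n & Hq & Hq1 & Hq0 & _ & Hg0g1 & Hu).
    assert (Hk : mul (mul g1 (inv g)) g = g1).
    { rewrite <- Hassoc. destruct (Hinv g) as [-> _]. apply Hunit. }
    exists q1, q2, (mul g1 (inv g)), m, n.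
    rewrite <- (Hright g0 (mul g1 (inv g)) g), Hk.
    repeat split; try apply Hq; auto.
Qed.

Theorem lemma2p2 (G : Type) (mul : G -> G -> G) (inv : G -> G) (e : G)
  (d : G -> G -> R) (G0 : G -> Prop)
  (HG : polish_group_with_metric mul inv e d)
  (Hright : right_invariant mul d)
  (Hbound : forall x y, d x y <= 1)
  (HG0sub : is_subgroup mul inv e G0)
  (HG0count : countable_set G0)
  (HG0dense : metric_dense d G0) :
  forall (F : list Qc -> G -> R) (g : G),
    in_X mul d G0 F -> in_X mul d G0 (act mul g F).
Proof.
  destruct HG as (Hgroup & (_ & _ & _ & Htri) & _).
  intros F g HX.
  assert (HL : forall s, in_L d (F s)) by apply HX.
  assert (HLg : forall s, in_L d (act mul g F s))
    by (intros s; apply in_L_translate; auto).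
  apply (in_X_everywhere G d G0 F Htri HG0dense HL) in HX.
  apply (in_X_everywhere G d G0 _ Htri HG0dense HLg).
  apply (in_X_everywhere_translate mul inv e); assumption.
Qed.
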